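(* Let $X_1,\dots,X_k$ be i.i.d. $C_0$-bounded random variables on $[0,L]$, and for $x\in[0,L]$ let $Y(x)=\min_{1\le j\le k}|x-X_j|$. Then $$\min_{0\le x\le L}\mathbf E\big(Y(x)\big)\ge\frac{1}{2C_0(k+1)}.$$
   Context: A real random variable $X$ is $C_0$-bounded (on $[0,L]$) if its cumulative distribution function $F$ equals $0$ on $(-\infty,0)$, $1$ on $(L,\infty)$, and $\varphi$ on $[0,L]$, where $\varphi$ is continuous and weakly differentiable on $[0,L]$ with $\varphi(0)=0$, $\varphi(L)=1$ and $\|\varphi'\|_{L_\infty([0,L])}\le C_0$. *)

From Stdlib Require Import Reals List.
Open Scope R_scope.

Fixpoint rsum (f : nat -> R) (n : nat) : R :=
  match n with O => 0 | S m => rsum f m + f m end.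

Definition gridpt (L : R) (N m : nat) : R := INR m * L / INR N.

(* Riemann--Stieltjes sum, on the uniform N^k grid of [0,L]^k (left tags),
   of g against the product of k copies of the law with CDF phi:
     sum_{i_1..i_k < N} g(a_{i_1},..,a_{i_k}) * prod_j (phi a_{i_j+1} - phi a_{i_j}). *)
Fixpoint stieltjes_sum (L : R) (phi : R -> R) (N : nat) (k : nat)
    (g : list R -> R) : R :=
  match k with
  | O => g nil
  | S k' => rsum (fun m =>
       (phi (gridpt L N (S m)) - phi (gridpt L N m)) *
       stieltjes_sum L phi N k' (fun l => g (gridpt L N m :: l))) N
  end.

(* E g(X_1,..,X_k) for X_j i.i.d. with CDF phi supported on [0,L] and g
   continuous is the limit of these sums (N = n+1 cells). *)
Definition iid_expect_seq (L : R) (phi : R -> R) (k : nat)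
    (g : list R -> R) : nat -> R :=
  fun n => stieltjes_sum L phi (S n) k g.

(* Y(x) = min_j |x - X_j| (value on the empty list irrelevant, k >= 1) *)
Definition Ymin (x : R) (l : list R) : R :=
  match l with
  | nil => 0
  | y :: l' => fold_left (fun acc z => Rmin acc (Rabs (x - z))) l' (Rabs (x - y))
  end.

From Stdlib Require Import Reals List Lra Lia Psatz.
Open Scope R_scope.

(* E Y(x) = int_0^oo P(Y(x) >= t) dt, and by independence P(Y(x) >= t) = P(|x - X_1| >= t)^k.
   As the CDF is C0-Lipschitz, X_1 lies in (x - t, x + t) with probability at most 2 C0 t, so
   E Y(x) >= int_0^(1/(2 C0)) (1 - 2 C0 t)^k dt = 1 / (2 C0 (k + 1)).
   The expectation is only given as a limit of Riemann-Stieltjes sums over grids of n + 1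
   cells, so the argument is run on each sum: the integral in t becomes a sum over n levels,
   the product of indicators turns the k-fold sum into a k-th power, the grid costs one extra
   cell width in the mass bound, and the n-th sum is at least 1 / (2 C0 (k + 1)) - O(1/(n+1)). *)

Lemma rsum_ext (f g : nat -> R) (n : nat) :
  (forall m, (m < n)%nat -> f m = g m) -> rsum f n = rsum g n.
Proof.
  induction n as [|n IH]; intros Hfg; simpl; [reflexivity|].
  rewrite IH, Hfg; [reflexivity | lia | intros; apply Hfg; lia].
Qed.

Lemma rsum_le (f g : nat -> R) (n : nat) :
  (forall m, (m < n)%nat -> f m <= g m) -> rsum f n <= rsum g n.
Proof.
  induction n as [|n IH]; intros Hfg; simpl; [lra|].
  assert (f n <= g n) by (apply Hfg; lia).
  assert (rsum f n <= rsum g n) by (apply IH; intros; apply Hfg; lia).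
  lra.
Qed.

Lemma rsum_plus (f g : nat -> R) (n : nat) :
  rsum (fun m => f m + g m) n = rsum f n + rsum g n.
Proof. induction n as [|n IH]; simpl; [|rewrite IH]; ring. Qed.

Lemma rsum_minus (f g : nat -> R) (n : nat) :
  rsum (fun m => f m - g m) n = rsum f n - rsum g n.
Proof. induction n as [|n IH]; simpl; [|rewrite IH]; ring. Qed.

Lemma rsum_scal (c : R) (f : nat -> R) (n : nat) :
  rsum (fun m => c * f m) n = c * rsum f n.
Proof. induction n as [|n IH]; simpl; [|rewrite IH]; ring. Qed.

Lemma rsum_const (c : R) (n : nat) : rsum (fun _ => c) n = INR n * c.
Proof. induction n as [|n IH]; simpl rsum; [simpl|rewrite IH, S_INR]; ring. Qed.

Lemma rsum_nonneg (f : nat -> R) (n : nat) :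
  (forall m, (m < n)%nat -> 0 <= f m) -> 0 <= rsum f n.
Proof.
  intros Hf. rewrite <- (Rmult_0_r (INR n)), <- rsum_const. now apply rsum_le.
Qed.

Lemma rsum_succ_l (f : nat -> R) (n : nat) :
  rsum f (S n) = f O + rsum (fun m => f (S m)) n.
Proof. induction n as [|n IH]; simpl in *; [|rewrite IH]; ring. Qed.

Lemma rsum_telescope (f : nat -> R) (n : nat) :
  rsum (fun m => f (S m) - f m) n = f n - f O.
Proof. induction n as [|n IH]; simpl; [|rewrite IH]; ring. Qed.

Lemma rsum_telescope_rev (f : nat -> R) (n : nat) :
  rsum (fun m => f m - f (S m)) n = f O - f n.
Proof. induction n as [|n IH]; simpl; [|rewrite IH]; ring. Qed.

Definition prodl (f : R -> R) (l : list R) : R :=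
  fold_right (fun y acc => f y * acc) 1 l.

Section StieltjesSums.

Variables (L : R) (phi : R -> R) (N : nat).

Definition cell_mass (m : nat) : R :=
  phi (gridpt L N (S m)) - phi (gridpt L N m).

Lemma stieltjes_sum_plus (k : nat) (g1 g2 : list R -> R) :
  stieltjes_sum L phi N k (fun l => g1 l + g2 l) =
  stieltjes_sum L phi N k g1 + stieltjes_sum L phi N k g2.
Proof.
  revert g1 g2; induction k as [|k IH]; intros g1 g2; simpl; [reflexivity|].
  rewrite <- rsum_plus. apply rsum_ext; intros m _. rewrite IH. ring.
Qed.

Lemma stieltjes_sum_scal (k : nat) (c : R) (g : list R -> R) :
  stieltjes_sum L phi N k (fun l => c * g l) = c * stieltjes_sum L phi N k g.
Proof.
  revert g; induction k as [|k IH]; intros g; simpl; [reflexivity|].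
  rewrite <- rsum_scal. apply rsum_ext; intros m _. rewrite IH. ring.
Qed.

Lemma stieltjes_sum_zero (k : nat) : stieltjes_sum L phi N k (fun _ => 0) = 0.
Proof.
  induction k as [|k IH]; simpl; [reflexivity|].
  rewrite (rsum_ext _ (fun _ => 0)), rsum_const; [ring|].
  intros m _. rewrite IH. ring.
Qed.

Lemma stieltjes_sum_rsum (k : nat) (G : nat -> list R -> R) (n : nat) :
  stieltjes_sum L phi N k (fun l => rsum (fun i => G i l) n) =
  rsum (fun i => stieltjes_sum L phi N k (G i)) n.
Proof.
  induction n as [|n IH]; simpl.
  - apply stieltjes_sum_zero.
  - rewrite stieltjes_sum_plus, IH. reflexivity.
Qed.

Lemma stieltjes_sum_le (k : nat) (g g' : list R -> R) :
  (forall m, (m < N)%nat -> 0 <= cell_mass m) ->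
  (forall l, length l = k -> g l <= g' l) ->
  stieltjes_sum L phi N k g <= stieltjes_sum L phi N k g'.
Proof.
  intros Hmass. revert g g'; induction k as [|k IH]; intros g g' Hgg'; simpl.
  - now apply Hgg'.
  - apply rsum_le; intros m Hm. apply Rmult_le_compat_l; [now apply Hmass|].
    apply IH. intros l Hl. apply Hgg'. simpl; lia.
Qed.

Lemma stieltjes_sum_prodl (k : nat) (f : R -> R) :
  stieltjes_sum L phi N k (prodl f) =
  rsum (fun m => cell_mass m * f (gridpt L N m)) N ^ k.
Proof.
  induction k as [|k IH]; simpl; [reflexivity|].
  rewrite Rmult_comm, <- rsum_scal. apply rsum_ext; intros m _.
  change (fun l => prodl f (gridpt L N m :: l))
    with (fun l => f (gridpt L N m) * prodl f l).
  rewrite stieltjes_sum_scal. fold (prodl f). rewrite IH. unfold cell_mass. ring.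
Qed.

End StieltjesSums.

Definition ind_le (t y : R) : R := if Rle_dec t y then 1 else 0.

Lemma ind_le_1 (t y : R) : t <= y -> ind_le t y = 1.
Proof. unfold ind_le; destruct Rle_dec; tauto. Qed.

Lemma ind_le_0 (t y : R) : ~ t <= y -> ind_le t y = 0.
Proof. unfold ind_le; destruct Rle_dec; tauto. Qed.

Lemma fold_min_dist_ge (x t : R) (l : list R) (acc : R) :
  t <= acc -> (forall y, In y l -> t <= Rabs (x - y)) ->
  t <= fold_left (fun acc z => Rmin acc (Rabs (x - z))) l acc.
Proof.
  revert acc; induction l as [|y l IH]; intros acc Hacc Hl; simpl; [exact Hacc|].
  apply IH; [apply Rmin_glb; [exact Hacc | apply Hl; now left]|].
  intros z Hz; apply Hl; now right.
Qed.

Lemma Ymin_ge (x t : R) (l : list R) :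
  l <> nil -> (forall y, In y l -> t <= Rabs (x - y)) -> t <= Ymin x l.
Proof.
  destruct l as [|y l]; [tauto|]. intros _ Hl. simpl.
  apply fold_min_dist_ge; [apply Hl; now left|].
  intros z Hz; apply Hl; now right.
Qed.

Lemma Ymin_nonneg (x : R) (l : list R) : l <> nil -> 0 <= Ymin x l.
Proof. intros Hl. apply Ymin_ge; [exact Hl|]. intros; apply Rabs_pos. Qed.

Lemma prodl_ind_le_dist_cases (t x : R) (l : list R) :
  prodl (fun y => ind_le t (Rabs (x - y))) l = 0 \/
  (prodl (fun y => ind_le t (Rabs (x - y))) l = 1 /\
   forall y, In y l -> t <= Rabs (x - y)).
Proof.
  induction l as [|y l IH]; [right; split; [reflexivity | simpl; tauto]|].
  simpl prodl. destruct (Rle_dec t (Rabs (x - y))) as [Hy|Hy];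
    [rewrite ind_le_1 by exact Hy | left; rewrite ind_le_0 by exact Hy; ring].
  destruct IH as [H0|[H1 Hl]]; [left; rewrite H0; ring|].
  right; split; [rewrite H1; ring|]. intros z [<-|Hz]; auto.
Qed.

Lemma prodl_ind_le_dist_le (t x : R) (l : list R) :
  l <> nil -> prodl (fun y => ind_le t (Rabs (x - y))) l <= ind_le t (Ymin x l).
Proof.
  intros Hl. unfold ind_le at 2.
  destruct (prodl_ind_le_dist_cases t x l) as [H0|[H1 Hfar]].
  - rewrite H0. destruct Rle_dec; lra.
  - rewrite H1. destruct Rle_dec as [|Hnot]; [lra|].
    exfalso; apply Hnot, Ymin_ge; assumption.
Qed.

Lemma layer_cake_le (y d : R) (n : nat) :
  0 < d -> 0 <= y -> d * rsum (fun m => ind_le (INR (S m) * d) y) n <= y.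
Proof.
  intros Hd Hy.
  enough (H : d * rsum (fun m => ind_le (INR (S m) * d) y) n <= Rmin y (INR n * d))
    by (eapply Rle_trans; [exact H | apply Rmin_l]).
  induction n as [|n IH].
  - simpl. unfold Rmin; destruct Rle_dec; lra.
  - change (rsum ?f (S n)) with (rsum f n + f n); cbv beta. rewrite S_INR. destruct (Rle_dec ((INR n + 1) * d) y) as [Hle|Hgt].
    + rewrite ind_le_1 by exact Hle.
      assert (Rmin y (INR n * d) <= INR n * d) by apply Rmin_r.
      apply Rmin_glb; lra.
    + rewrite ind_le_0 by exact Hgt.
      assert (Rmin y (INR n * d) <= Rmin y ((INR n + 1) * d))
        by (unfold Rmin; repeat destruct Rle_dec; lra).
      lra.
Qed.

Lemma Ymin_ge_levels (x d : R) (l : list R) (n : nat) :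
  l <> nil -> 0 < d ->
  d * rsum (fun m => prodl (fun y => ind_le (INR (S m) * d) (Rabs (x - y))) l) n
  <= Ymin x l.
Proof.
  intros Hl Hd. eapply Rle_trans; [|apply layer_cake_le; [exact Hd | now apply Ymin_nonneg]].
  apply Rmult_le_compat_l; [lra|].
  apply rsum_le; intros m _. now apply prodl_ind_le_dist_le.
Qed.

Lemma pow_sub_le (a b : R) (n : nat) :
  0 <= b <= a -> a ^ S n - b ^ S n <= INR (S n) * a ^ n * (a - b).
Proof.
  intros Hab. induction n as [|n IH]; [simpl; lra|].
  rewrite (S_INR (S n)).
  assert (Hbn : b ^ S n <= a ^ S n) by (apply pow_incr; lra).
  assert (Hb0 : 0 <= b ^ S n) by (apply pow_le; lra).
  assert (a * (a ^ S n - b ^ S n) <= a * (INR (S n) * a ^ n * (a - b)))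
    by (apply Rmult_le_compat_l; lra).
  assert ((a - b) * b ^ S n <= (a - b) * a ^ S n) by (apply Rmult_le_compat_l; lra).
  change (a ^ S (S n)) with (a * a ^ S n). change (b ^ S (S n)) with (b * b ^ S n).
  change (a ^ S n) with (a * a ^ n) in *. nra.
Qed.

Lemma pow_ge_sub (a e q : R) (k : nat) :
  0 <= a <= 1 -> 0 <= e -> 0 <= q -> a - e <= q -> a ^ k - INR k * e <= q ^ k.
Proof.
  intros Ha He Hq Hq_ge. destruct k as [|k]; [simpl; lra|].
  assert (Hk : 1 <= INR (S k)) by (apply (le_INR 1); lia).
  assert (Hak : 0 <= a ^ k <= 1)
    by (split; [apply pow_le | rewrite <- (pow1 k); apply pow_incr]; lra).
  assert (0 <= q ^ S k) by (apply pow_le; lra).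
  destruct (Rle_or_lt (a - e) 0) as [Hae|Hae].
  - assert (a ^ S k <= a) by (simpl; nra). nra.
  - assert ((a - e) ^ S k <= q ^ S k) by (apply pow_incr; lra).
    assert (Hsub := pow_sub_le a (a - e) k ltac:(lra)).
    replace (a - (a - e)) with e in Hsub by ring.
    assert (INR (S k) * a ^ k * e <= INR (S k) * e).
    { rewrite Rmult_assoc. apply Rmult_le_compat_l; [lra|].
      rewrite <- (Rmult_1_l e) at 2. apply Rmult_le_compat_r; lra. }
    lra.
Qed.

(* Lower Riemann sum of s |-> (1 - s)^k at the nodes m/(n+1), m = 1..n, telescoped against
   s |-> (1 - s)^(k+1); the missing node s = 0 costs the 1/(n+1). *)
Lemma riemann_sum_pow_ge (k n : nat) :
  1 / (INR k + 1) - 1 / INR (S n) <=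
  rsum (fun m => (1 - INR (S m) / INR (S n)) ^ k) n / INR (S n).
Proof.
  set (M := INR (S n)). set (s := fun m => 1 - INR m / M).
  assert (HM : 0 < M) by (apply lt_0_INR; lia).
  assert (Hk : 0 < INR k + 1) by (pose proof (pos_INR k); lra).
  assert (Hstep : forall m, (m < S n)%nat ->
    s m ^ S k - s (S m) ^ S k <= (INR k + 1) / M * s m ^ k).
  { intros m Hm. unfold s.
    assert (INR (S m) <= M) by (apply le_INR; lia).
    assert (Hu : 0 < / M) by (apply Rinv_0_lt_compat, HM).
    assert (HMu : M * / M = 1) by (field; lra).
    rewrite S_INR in *. unfold Rdiv.
    eapply Rle_trans; [apply pow_sub_le; split; nra|].
    rewrite S_INR. right. field. lra. }
  apply rsum_le in Hstep.
  rewrite rsum_telescope_rev, rsum_scal, rsum_succ_l in Hstep.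
  assert (Hs0 : s O = 1) by (unfold s; simpl; field; lra).
  assert (HsM : s (S n) = 0) by (unfold s; fold M; field; lra).
  rewrite Hs0, HsM, pow_i, !pow1 in Hstep by lia.
  fold M. change (fun m => (1 - INR (S m) / M) ^ k) with (fun m => s (S m) ^ k).
  set (Sigma := rsum (fun m => s (S m) ^ k) n) in *.
  assert (Hbound : M <= (INR k + 1) * (1 + Sigma)).
  { apply (Rmult_le_reg_r (/ M)); [now apply Rinv_0_lt_compat|].
    replace (M * / M) with 1 by (field; lra).
    replace ((INR k + 1) * (1 + Sigma) * / M) with ((INR k + 1) / M * (1 + Sigma))
      by (field; lra).
    lra. }
  apply (Rmult_le_reg_l ((INR k + 1) * M)); [nra|].
  replace ((INR k + 1) * M * (1 / (INR k + 1) - 1 / M)) with (M - (INR k + 1))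
    by (field; lra).
  replace ((INR k + 1) * M * (Sigma / M)) with ((INR k + 1) * Sigma) by (field; lra).
  lra.
Qed.

Lemma gridpt_0 (L : R) (N : nat) : gridpt L N 0 = 0.
Proof. unfold gridpt; simpl; lra. Qed.

Lemma gridpt_N (L : R) (N : nat) : (0 < N)%nat -> gridpt L N N = L.
Proof. intros HN. assert (0 < INR N) by (apply lt_0_INR; lia). unfold gridpt. field; lra. Qed.

Lemma gridpt_S (L : R) (N m : nat) :
  (0 < N)%nat -> gridpt L N (S m) = gridpt L N m + L / INR N.
Proof.
  intros HN. assert (0 < INR N) by (apply lt_0_INR; lia).
  unfold gridpt. rewrite S_INR. field; lra.
Qed.

Lemma gridpt_bounds (L : R) (N m : nat) :
  0 <= L -> (m <= N)%nat -> (0 < N)%nat -> 0 <= gridpt L N m <= L.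
Proof.
  intros HL Hm HN. assert (HNr : 0 < INR N) by (apply lt_0_INR; lia).
  assert (0 <= INR m <= INR N) by (split; [apply pos_INR | apply le_INR; lia]).
  assert (Hinv : 0 < / INR N) by (apply Rinv_0_lt_compat, HNr).
  assert (INR N * / INR N = 1) by (field; lra).
  assert (0 <= L * / INR N) by (apply Rmult_le_pos; lra).
  unfold gridpt, Rdiv. rewrite Rmult_assoc. split; nra.
Qed.

Section LipschitzCDF.

Variables (L C0 : R) (phi : R -> R).

Hypothesis L_pos : 0 < L.
Hypothesis phi_0 : phi 0 = 0.
Hypothesis phi_L : phi L = 1.
Hypothesis phi_mono :
  forall x y, 0 <= x <= L -> 0 <= y <= L -> x <= y -> phi x <= phi y.
Hypothesis phi_lipschitz :
  forall x y, 0 <= x <= L -> 0 <= y <= L -> Rabs (phi x - phi y) <= C0 * Rabs (x - y).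

Lemma lipschitz_const_pos : 0 < C0.
Proof.
  assert (H := phi_lipschitz L 0 ltac:(lra) ltac:(lra)).
  rewrite phi_0, phi_L, !Rminus_0_r, Rabs_R1, Rabs_pos_eq in H by lra.
  nra.
Qed.

Lemma cell_mass_nonneg (N m : nat) :
  (0 < N)%nat -> (m < N)%nat -> 0 <= cell_mass L phi N m.
Proof.
  intros HN Hm. unfold cell_mass.
  assert (0 < INR N) by (apply lt_0_INR; lia).
  assert (0 <= L / INR N) by (apply Rlt_le, Rdiv_lt_0_compat; lra).
  enough (phi (gridpt L N m) <= phi (gridpt L N (S m))) by lra.
  apply phi_mono; try (apply gridpt_bounds; lra || lia).
  rewrite gridpt_S by exact HN. lra.
Qed.

Lemma rsum_cell_mass (N : nat) : (0 < N)%nat -> rsum (cell_mass L phi N) N = 1.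
Proof.
  intros HN. unfold cell_mass.
  rewrite (rsum_telescope (fun m => phi (gridpt L N m))), gridpt_N, gridpt_0 by exact HN.
  lra.
Qed.

Lemma near_mass_le (N : nat) (x t : R) :
  (0 < N)%nat -> 0 <= t ->
  rsum (fun m => cell_mass L phi N m * (1 - ind_le t (Rabs (x - gridpt L N m)))) N
  <= C0 * (2 * t + L / INR N).
Proof.
  intros HN Ht. assert (HC := lipschitz_const_pos).
  assert (0 < INR N) by (apply lt_0_INR; lia).
  set (h := L / INR N). assert (Hh : 0 < h) by (apply Rdiv_lt_0_compat; lra).
  (* [clamp] increases by h across every cell whose left node lies within t of x,
     and by at most 2 t + h in total. *)
  set (clamp := fun y => Rmax (x - t) (Rmin y (x + t + h))).
  assert (Hcell : forall m, (m < N)%nat ->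
    cell_mass L phi N m * (1 - ind_le t (Rabs (x - gridpt L N m)))
    <= C0 * (clamp (gridpt L N (S m)) - clamp (gridpt L N m))).
  { intros m Hm. unfold cell_mass. rewrite (gridpt_S L N m HN). fold h.
    assert (Ha : 0 <= gridpt L N m <= L) by (apply gridpt_bounds; lra || lia).
    assert (Hah : 0 <= gridpt L N m + h <= L)
      by (unfold h; rewrite <- gridpt_S by exact HN; apply gridpt_bounds; lra || lia).
    set (a := gridpt L N m) in *.
    destruct (Rle_dec t (Rabs (x - a))) as [Hfar|Hnear].
    - rewrite ind_le_1 by exact Hfar. rewrite Rminus_diag, Rmult_0_r.
      apply Rmult_le_pos; [lra|]. unfold clamp, Rmax, Rmin. repeat destruct Rle_dec; lra.
    - rewrite ind_le_0 by exact Hnear. rewrite Rminus_0_r, Rmult_1_r.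
      apply Rnot_le_lt, Rabs_def2 in Hnear.
      replace (clamp (a + h) - clamp a) with h
        by (unfold clamp, Rmax, Rmin; repeat destruct Rle_dec; lra).
      assert (Hlip := phi_lipschitz (a + h) a Hah Ha).
      replace (a + h - a) with h in Hlip by ring. rewrite (Rabs_pos_eq h) in Hlip by lra.
      pose proof (Rle_abs (phi (a + h) - phi a)). lra. }
  apply rsum_le in Hcell.
  rewrite rsum_scal, (rsum_telescope (fun m => clamp (gridpt L N m))),
    gridpt_N, gridpt_0 in Hcell by exact HN.
  assert (clamp L - clamp 0 <= 2 * t + h)
    by (unfold clamp, Rmax, Rmin; repeat destruct Rle_dec; lra).
  assert (C0 * (clamp L - clamp 0) <= C0 * (2 * t + h)) by (apply Rmult_le_compat_l; lra).
  lra.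
Qed.

Lemma far_mass_ge (N : nat) (x t : R) :
  (0 < N)%nat -> 0 <= t ->
  1 - C0 * (2 * t + L / INR N)
  <= rsum (fun m => cell_mass L phi N m * ind_le t (Rabs (x - gridpt L N m))) N.
Proof.
  intros HN Ht. pose proof (near_mass_le N x t HN Ht) as Hnear.
  rewrite (rsum_ext _ (fun m => cell_mass L phi N m -
      cell_mass L phi N m * ind_le t (Rabs (x - gridpt L N m)))) in Hnear
    by (intros; ring).
  rewrite rsum_minus, rsum_cell_mass in Hnear by exact HN.
  lra.
Qed.

Lemma stieltjes_sum_Ymin_ge_levels (k N n : nat) (x d : R) :
  (1 <= k)%nat -> (0 < N)%nat -> 0 < d ->
  d * rsum (fun m => rsum (fun j => cell_mass L phi N j *
        ind_le (INR (S m) * d) (Rabs (x - gridpt L N j))) N ^ k) n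
  <= stieltjes_sum L phi N k (Ymin x).
Proof.
  intros Hk HN Hd.
  rewrite (rsum_ext _ (fun m => stieltjes_sum L phi N k
      (prodl (fun y => ind_le (INR (S m) * d) (Rabs (x - y))))))
    by (intros; symmetry; apply stieltjes_sum_prodl).
  rewrite <- stieltjes_sum_rsum, <- stieltjes_sum_scal.
  apply stieltjes_sum_le; [intros m Hm; now apply cell_mass_nonneg|].
  intros l Hl. apply Ymin_ge_levels; [|exact Hd].
  intros ->. simpl in Hl. lia.
Qed.

Lemma stieltjes_sum_Ymin_ge (k n : nat) (x : R) :
  (1 <= k)%nat ->
  1 / (2 * C0 * (INR k + 1)) - (1 / (2 * C0) + INR k * L / 2) / INR (S n)
  <= stieltjes_sum L phi (S n) k (Ymin x).
Proof.
  intros Hk. assert (HC := lipschitz_const_pos).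
  set (M := INR (S n)). assert (HM : 0 < M) by (apply lt_0_INR; lia).
  assert (Hu : 0 < / M) by (apply Rinv_0_lt_compat, HM).
  assert (HMu : M * / M = 1) by (field; lra).
  assert (Hn : INR n <= M) by (apply le_INR; lia).
  assert (Hk0 : 0 <= INR k) by apply pos_INR.
  (* n levels of spacing d = 1/(2 C0 (n+1)) exhaust the range [0, 1/(2 C0)] *)
  set (d := 1 / (2 * C0 * M)). assert (Hd : 0 < d) by (unfold d; apply Rdiv_lt_0_compat; nra).
  set (h := L / M). assert (Hh : 0 < h) by (apply Rdiv_lt_0_compat; lra).
  assert (Hlevels := stieltjes_sum_Ymin_ge_levels k (S n) n x d Hk ltac:(lia) Hd).
  set (q := fun m => rsum (fun j => cell_mass L phi (S n) j *
        ind_le (INR (S m) * d) (Rabs (x - gridpt L (S n) j))) (S n)).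
  change (d * rsum (fun m => q m ^ k) n <= stieltjes_sum L phi (S n) k (Ymin x)) in Hlevels.
  assert (Hq : forall m, (m < n)%nat ->
    (1 - INR (S m) / M) ^ k - INR k * (C0 * h) <= q m ^ k).
  { intros m Hm. assert (INR (S m) <= M) by (apply le_INR; lia).
    assert (0 <= INR (S m)) by apply pos_INR.
    apply pow_ge_sub; unfold Rdiv.
    - split; nra.
    - apply Rmult_le_pos; lra.
    - apply rsum_nonneg; intros j Hj. apply Rmult_le_pos.
      + now apply cell_mass_nonneg; lia.
      + unfold ind_le; destruct Rle_dec; lra.
    - eapply Rle_trans; [|apply far_mass_ge; [lia | apply Rmult_le_pos; lra]].
      right. fold M. unfold d, h. field. lra. }
  apply rsum_le in Hq. rewrite rsum_minus, rsum_const in Hq.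
  assert (Hriemann := riemann_sum_pow_ge k n). fold M in Hriemann.
  set (Sigma := rsum (fun m => (1 - INR (S m) / M) ^ k) n) in *.
  assert (Hmain : / (2 * C0) * (1 / (INR k + 1) - 1 / M) <= / (2 * C0) * (Sigma / M))
    by (apply Rmult_le_compat_l; [apply Rlt_le, Rinv_0_lt_compat|]; lra).
  assert (Herr : INR n / M * (INR k * L / 2 / M) <= INR k * L / 2 / M).
  { rewrite <- (Rmult_1_l (INR k * L / 2 / M)) at 2.
    apply Rmult_le_compat_r; unfold Rdiv; [|nra].
    repeat apply Rmult_le_pos; lra. }
  assert (Hsplit : d * (Sigma - INR n * (INR k * (C0 * h))) =
    / (2 * C0) * (Sigma / M) - INR n / M * (INR k * L / 2 / M))
    by (unfold d, h; field; lra).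
  assert (d * (Sigma - INR n * (INR k * (C0 * h))) <= d * rsum (fun m => q m ^ k) n)
    by (apply Rmult_le_compat_l; lra).
  replace (1 / (2 * C0 * (INR k + 1)) - (1 / (2 * C0) + INR k * L / 2) / M)
    with (/ (2 * C0) * (1 / (INR k + 1) - 1 / M) - INR k * L / 2 / M)
    by (field; lra).
  lra.
Qed.

End LipschitzCDF.

Lemma Un_cv_const (c : R) : Un_cv (fun _ => c) c.
Proof. intros eps Heps. exists O. intros n _. unfold R_dist. rewrite Rminus_diag, Rabs_R0. lra. Qed.

Lemma Un_cv_ge_of_ge_sub_inv (u : nat -> R) (l B K : R) :
  Un_cv u l -> (forall n, B - K / INR (S n) <= u n) -> B <= l.
Proof.
  intros Hu Hlb.
  assert (Hlow : Un_cv (fun n => B - K * RinvN n) (B - K * 0))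
    by (apply CV_minus, CV_mult; [apply Un_cv_const | apply Un_cv_const | apply RinvN_cv]).
  rewrite Rmult_0_r, Rminus_0_r in Hlow.
  apply (Rle_cv_lim Hlb); [|exact Hu].
  intros eps Heps. destruct (Hlow eps Heps) as [n0 Hn0]. exists n0. intros n Hn.
  specialize (Hn0 n Hn). simpl in Hn0. rewrite S_INR. exact Hn0.
Qed.

Theorem mainTheorem11 (L C0 : R) (phi : R -> R) (k : nat) (EY : R -> R) :
  0 < L ->
  (1 <= k)%nat ->
  phi 0 = 0 -> phi L = 1 ->
  (forall x y, 0 <= x <= L -> 0 <= y <= L -> x <= y -> phi x <= phi y) ->
  (forall x y, 0 <= x <= L -> 0 <= y <= L ->
     Rabs (phi x - phi y) <= C0 * Rabs (x - y)) ->
  (forall x, 0 <= x <= L -> Un_cv (iid_expect_seq L phi k (Ymin x)) (EY x)) ->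
  forall x, 0 <= x <= L -> EY x >= 1 / (2 * C0 * (INR k + 1)).
Proof.
  intros HL Hk H0 H1 Hmono Hlip Hcv x Hx.
  apply Rle_ge, (Un_cv_ge_of_ge_sub_inv _ _ _ (1 / (2 * C0) + INR k * L / 2) (Hcv x Hx)).
  intros n. now apply stieltjes_sum_Ymin_ge.
Qed.
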